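(* Let $n\ge2$ and let $M$ be a nonderogatory $d\times d$ complex matrix with minimal polynomial $\mathbf p$. Every maximal subalgebra $\mathcal B$ of $\mathcal T_{n,d}[\mathcal P(M)]$ equals $\mathfrak B(\mathbf p_+,\mathbf p_-,\boldsymbol\chi)$ for some polynomials $\mathbf p_+,\mathbf p_-,\boldsymbol\chi\in\mathbb C[X]$ with $\mathbf p_+\mathbf p_-$ dividing $\mathbf p$ and $\boldsymbol\chi$ relatively prime to $\mathbf p$.
   Context: A nonderogatory matrix is one whose minimal polynomial equals its characteristic polynomial; $\mathcal P(M)$ is the algebra of polynomials in $M$; $\mathcal T_{n,d}[\mathcal P(M)]$ is the set of $n\times n$ block Toeplitz matrices $(B_{i-j})_{i,j=0}^{n-1}$ with all $B_m\in\mathcal P(M)$. A maximal subalgebra of $\mathcal T_{n,d}[\mathcal P(M)]$ is a subalgebra (linear subspace closed under multiplication) contained in it and maximal under inclusion among such. For $\mathbf p_+,\mathbf p_-,\boldsymbol\chi$ with $\mathbf p_+\mathbf p_-\mid\mathbf p$ and $\boldsymbol\chi$ coprime to $\mathbf p$, and $\mathbf q=\mathbf p/(\mathbf p_+\mathbf p_-)$, $\mathfrak B(\mathbf p_+,\mathbf p_-,\boldsymbol\chi)$ is the set of block Toeplitz matrices $A=(A_{i-j})$ with all $A_i\in\mathcal P(M)$ such that for each $i=1,\dots,n-1$ there are polynomials $\mathbf a_i,\mathbf a_{i-n}$ with $A_i=\mathbf p_+(M)\mathbf a_i(M)$, $A_{i-n}=\mathbf p_-(M)\mathbf a_{i-n}(M)$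 and $\mathbf q\mid\mathbf a_i-\boldsymbol\chi\mathbf a_{i-n}$. *)

From HB Require Import structures.
From mathcomp Require Import all_boot all_order all_algebra.
Set Implicit Arguments. Unset Strict Implicit. Unset Printing Implicit Defensive.
Import Order.TTheory GRing.Theory Num.Theory.
Local Open Scope ring_scope.

Section Defs.
Variable C : fieldType.

Definition polyalg (d : nat) (M : 'M[C]_d.+1) (X : 'M[C]_d.+1) : Prop :=
  exists q : {poly C}, X = horner_mx M q.

Definition blk (n m : nat) (A : 'M[C]_(n * m)) (i j : 'I_n) : 'M[C]_m :=
  \matrix_(a < m, b < m) A (mxvec_index i a) (mxvec_index j b).

Definition is_block_toeplitz (n m : nat) (A : 'M[C]_(n * m)) (B : int -> 'M[C]_m) :=
  forall i j : 'I_n, blk A i j = B (i%:Z - j%:Z).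

Definition toeplitzP (n d : nat) (M : 'M[C]_d.+1) (A : 'M[C]_(n * d.+1)) : Prop :=
  exists B : int -> 'M[C]_d.+1,
    (forall k, polyalg M (B k)) /\ is_block_toeplitz A B.

Definition is_subalgebra (N : nat) (S : 'M[C]_N -> Prop) : Prop :=
  [/\ S 0,
      (forall A B, S A -> S B -> S (A + B)),
      (forall (c : C) A, S A -> S (c *: A)) &
      (forall A B, S A -> S B -> S (A *m B))].

Definition is_maximal_subalgebra_of (N : nat) (T S : 'M[C]_N -> Prop) : Prop :=
  [/\ is_subalgebra S,
      (forall A, S A -> T A) &
      (forall S', is_subalgebra S' -> (forall A, S' A -> T A) ->
         (forall A, S A -> S' A) -> forall A, S' A -> S A)].

Definition frakB (n d : nat) (M : 'M[C]_d.+1) (pp pm chi : {poly C})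
    (A : 'M[C]_(n * d.+1)) : Prop :=
  let q := mxminpoly M %/ (pp * pm) in
  exists B : int -> 'M[C]_d.+1,
    [/\ (forall k, polyalg M (B k)),
        is_block_toeplitz A B &
        (forall i : nat, (1 <= i <= n.-1)%N ->
           exists a1 a2 : {poly C},
             [/\ B i%:Z = horner_mx M pp *m horner_mx M a1,
                 B (i%:Z - n%:Z) = horner_mx M pm *m horner_mx M a2 &
                 q %| a1 - chi * a2])].

Definition nonderogatory (d : nat) (M : 'M[C]_d.+1) : Prop :=
  mxminpoly M = char_poly M.
End Defs.

From HB Require Import structures.
From mathcomp Require Import all_boot all_order all_algebra.
From mathcomp Require Import ring zify.
From Stdlib Require Import Classical.
Import Order.TTheory GRing.Theory Num.Theory.
Local Open Scope ring_scope.
Set Implicit Arguments. Unset Strict Implicit. Unset Printing Implicit Defensive.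

(* Let p be the minimal polynomial of M and write the corner blocks of a block
   Toeplitz A in a subalgebra S as A_i = x(M), A_(i-n) = y(M), 0 < i < n.  Since the
   product of two elements of S is again block Toeplitz, comparing two consecutive
   diagonal blocks of the product gives A_i A'_(j-n) = A_(i-n) A'_j, i.e. the corner
   pairs are isotropic for the form x y' - y x' modulo p.  The C[X]-module L they
   span together with (p, 0) and (0, p) is then isotropic too.  Let (e, f) in L
   have first coordinate generating the ideal of first coordinates; then e | p,
   and isotropy of (e, f) against any (0, y) in L makes y a multiple of h = p / e.
   Splitting g = gcd(h, f) off h and f, every corner pair has the shape
   (e a1, g a2) with p / (e g) | a1 - chi a2, where chi is an inverse of f / g
   modulo h / g chosen coprime to p.  So S lies in B(e, g, chi), which is itself a
   subalgebra of the Toeplitz algebra, and maximality of S forces equality. *)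

Section BlockMatrix.
Variables (C : fieldType) (n m : nat).

Lemma blk_mul (A B : 'M[C]_(n * m)) i j :
  blk (A *m B) i j = \sum_(k < n) blk A i k *m blk B k j.
Proof.
apply/matrixP => a b; rewrite !mxE summxE.
under [RHS]eq_bigr => k _ do rewrite mxE.
rewrite pair_big /= (reindex (fun kc : 'I_n * 'I_m => mxvec_index kc.1 kc.2)) /=.
  by apply: eq_bigr => -[k c] _ /=; rewrite !mxE.
apply: onW_bij; apply: inj_card_bij; last by rewrite card_prod !card_ord.
move=> [k c] [k' c'] /= /(congr1 val) /= /val_inj /(congr1 (@enum_val _ _)).
by rewrite !enum_rankK => -[-> ->].
Qed.

Lemma blkD (A B : 'M[C]_(n * m)) i j : blk (A + B) i j = blk A i j + blk B i j.
Proof. by apply/matrixP => a b; rewrite !mxE. Qed.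

Lemma blkZ c (A : 'M[C]_(n * m)) i j : blk (c *: A) i j = c *: blk A i j.
Proof. by apply/matrixP => a b; rewrite !mxE. Qed.

Lemma blk0 i j : blk (0 : 'M[C]_(n * m)) i j = 0.
Proof. by apply/matrixP => a b; rewrite !mxE. Qed.

End BlockMatrix.

Section ToeplitzProduct.
Variables (C : fieldType) (n m : nat).
Implicit Types Ba Bb : int -> 'M[C]_m.

Definition toep_prod Ba Bb (i j : nat) :=
  \sum_(k < n) Ba (i%:Z - k%:Z) *m Bb (k%:Z - j%:Z).

Definition toep_symbol Ba Bb (k : int) : 'M[C]_m :=
  match k with Posz k => toep_prod Ba Bb k 0 | Negz k => toep_prod Ba Bb 0 k.+1 end.

Definition toeplitz_mul_cond Ba Bb := forall u v : nat,
  (0 < u < n)%N -> (0 < v < n)%N ->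
  Ba u%:Z *m Bb (v%:Z - n%:Z) = Ba (u%:Z - n%:Z) *m Bb v%:Z.

Lemma blk_mul_toeplitz (A B : 'M[C]_(n * m)) Ba Bb :
  is_block_toeplitz A Ba -> is_block_toeplitz B Bb ->
  forall i j : 'I_n, blk (A *m B) i j = toep_prod Ba Bb i j.
Proof. by move=> hA hB i j; rewrite blk_mul; apply: eq_bigr => k _; rewrite hA hB. Qed.

Lemma toep_prod_shift Ba Bb (i j : nat) : (0 < n)%N ->
  toep_prod Ba Bb i.+1 j.+1 + Ba (i.+1%:Z - n%:Z) *m Bb (n%:Z - j.+1%:Z)
  = toep_prod Ba Bb i j + Ba i.+1%:Z *m Bb (- j.+1%:Z).
Proof.
rewrite /toep_prod; case: n => // n' _; rewrite big_ord_recl big_ord_recr /=.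
have eS (a b : nat) : a.+1%:Z - b.+1%:Z = a%:Z - b%:Z by lia.
rewrite (_ : i.+1%:Z - 0%N%:Z = i.+1%:Z); last by lia.
rewrite (_ : 0%N%:Z - j.+1%:Z = - j.+1%:Z); last by lia.
rewrite !eS (eq_bigr (fun k : 'I_n' => Ba (i%:Z - k%:Z) *m Bb (k%:Z - j%:Z))).
  by rewrite [LHS]addrAC [LHS]addrC [RHS]addrAC -addrA.
by move=> k _; rewrite /bump /= !add1n !eS.
Qed.

Lemma toep_prod_step Ba Bb (i j : nat) : toeplitz_mul_cond Ba Bb ->
  (i.+1 < n)%N -> (j.+1 < n)%N -> toep_prod Ba Bb i.+1 j.+1 = toep_prod Ba Bb i j.
Proof.
move=> hc hi hj; have := toep_prod_shift Ba Bb i j (ltn_trans (ltn0Sn _) hi).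
have := hc i.+1 (n - j.+1)%N; rewrite hi ltn0Sn /=.
have -> : (0 < n - j.+1 < n)%N by apply/andP; split; lia.
move=> /(_ isT isT).
rewrite (_ : (n - j.+1)%N%:Z - n%:Z = - j.+1%:Z); last by lia.
rewrite (_ : (n - j.+1)%N%:Z = n%:Z - j.+1%:Z); last by lia.
by move=> ->; move/addIr.
Qed.

Lemma toeplitz_mul (A B : 'M[C]_(n * m)) Ba Bb :
  is_block_toeplitz A Ba -> is_block_toeplitz B Bb -> toeplitz_mul_cond Ba Bb ->
  is_block_toeplitz (A *m B) (toep_symbol Ba Bb).
Proof.
move=> hA hB hc i j; rewrite (blk_mul_toeplitz hA hB).
move: (ltn_ord i) (ltn_ord j); move: (nat_of_ord i) (nat_of_ord j) => {}i {}j.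
elim: j i => [|j IH] [|i] hi hj; rewrite ?subr0 ?sub0r //.
rewrite toep_prod_step // IH; try lia.
by rewrite (_ : i.+1%:Z - j.+1%:Z = i%:Z - j%:Z) //; lia.
Qed.

Lemma toeplitz_mul_condP (A B : 'M[C]_(n * m)) Ba Bb Bc :
  is_block_toeplitz A Ba -> is_block_toeplitz B Bb ->
  is_block_toeplitz (A *m B) Bc -> toeplitz_mul_cond Ba Bb.
Proof.
move=> hA hB hc u v /andP[u0 un] /andP[v0 vn].
have blkE (a b : nat) : (a < n)%N -> (b < n)%N -> toep_prod Ba Bb a b = Bc (a%:Z - b%:Z).
  by move=> ha hb; have := hc (Ordinal ha) (Ordinal hb); rewrite (blk_mul_toeplitz hA hB).
set i := u.-1; set j := (n - v).-1.
have hs : toep_prod Ba Bb i.+1 j.+1 = toep_prod Ba Bb i j.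
  rewrite !blkE; try lia.
  by rewrite (_ : i.+1%:Z - j.+1%:Z = i%:Z - j%:Z) //; lia.
have := toep_prod_shift Ba Bb i j (ltn_trans u0 un); rewrite hs => /addrI.
rewrite (_ : i.+1 = u); last by lia.
rewrite (_ : n%:Z - j.+1%:Z = v%:Z); last by lia.
by rewrite (_ : - j.+1%:Z = v%:Z - n%:Z); last by lia.
Qed.

End ToeplitzProduct.

Section PolyAlgebra.
Variables (C : fieldType) (d : nat) (M : 'M[C]_d.+1).

Lemma polyalg0 : polyalg M 0.
Proof. by exists 0; rewrite rmorph0. Qed.

Lemma polyalgD X Y : polyalg M X -> polyalg M Y -> polyalg M (X + Y).
Proof. by move=> [p ->] [q ->]; exists (p + q); rewrite rmorphD. Qed.

Lemma polyalgM X Y : polyalg M X -> polyalg M Y -> polyalg M (X *m Y).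
Proof. by move=> [p ->] [q ->]; exists (p * q); rewrite rmorphM mulmxE. Qed.

Lemma polyalgZ c X : polyalg M X -> polyalg M (c *: X).
Proof.
by move=> [p ->]; exists (c%:P * p); rewrite rmorphM /= horner_mx_C -mulmxE mul_scalar_mx.
Qed.

Lemma polyalg_sum (I : Type) (r : seq I) (F : I -> 'M[C]_d.+1) :
  (forall k, polyalg M (F k)) -> polyalg M (\sum_(k <- r) F k).
Proof.
move=> hF; elim: r => [|a r IH]; first by rewrite big_nil; exact: polyalg0.
by rewrite big_cons; apply: polyalgD.
Qed.

Lemma polyalg_comm X Y : polyalg M X -> polyalg M Y -> X *m Y = Y *m X.
Proof. by move=> [p ->] [q ->]; rewrite !mulmxE -!rmorphM mulrC. Qed.

Lemma toep_symbol_polyalg n (Ba Bb : int -> 'M[C]_d.+1) k :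
  (forall k, polyalg M (Ba k)) -> (forall k, polyalg M (Bb k)) ->
  polyalg M (toep_symbol n Ba Bb k).
Proof. by move=> ha hb; case: k => k; apply: polyalg_sum => j; apply: polyalgM. Qed.

End PolyAlgebra.

Section CornerRelation.
Variables (C : fieldType) (n d : nat) (M : 'M[C]_d.+1).
Local Notation m := d.+1.

Definition toeplitz_corner_rel (Lp : 'M[C]_m -> 'M[C]_m -> Prop) (A : 'M[C]_(n * m)) :=
  exists B : int -> 'M[C]_m,
    [/\ (forall k, polyalg M (B k)),
        is_block_toeplitz A B &
        (forall i : nat, (1 <= i <= n.-1)%N -> Lp (B i%:Z) (B (i%:Z - n%:Z)))].

Variable Lp : 'M[C]_m -> 'M[C]_m -> Prop.
Hypothesis Lp0 : Lp 0 0.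
Hypothesis LpD : forall X Y X' Y', Lp X Y -> Lp X' Y' -> Lp (X + X') (Y + Y').
Hypothesis LpMr : forall X Y R, polyalg M R -> Lp X Y -> Lp (X *m R) (Y *m R).
Hypothesis Lp_cross : forall X Y X' Y', Lp X Y -> Lp X' Y' -> X *m Y' = Y *m X'.

Lemma Lp_sum (r : seq nat) (X Y : nat -> 'M[C]_m) :
  (forall k, k \in r -> Lp (X k) (Y k)) ->
  Lp (\sum_(k <- r) X k) (\sum_(k <- r) Y k).
Proof.
elim: r => [|a r IH] h; first by rewrite !big_nil.
rewrite !big_cons; apply: LpD; first by apply: h; rewrite inE eqxx.
by apply: IH => k hk; apply: h; rewrite inE hk orbT.
Qed.

(* The terms of the two corner blocks of a product pair off into Lp-related pairs:
   [Ba (i - k) Bb k] with [Ba (i - k - n) Bb k] for k < i, and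
   [Ba (- k) Bb (i + k)] with [Ba (- k) Bb (i + k - n)] for k < n - i. *)
Lemma toep_symbol_corner (Ba Bb : int -> 'M[C]_m) (i : nat) :
  (forall k, polyalg M (Ba k)) -> (forall k, polyalg M (Bb k)) ->
  (forall i : nat, (1 <= i <= n.-1)%N -> Lp (Ba i%:Z) (Ba (i%:Z - n%:Z))) ->
  (forall i : nat, (1 <= i <= n.-1)%N -> Lp (Bb i%:Z) (Bb (i%:Z - n%:Z))) ->
  (1 <= i <= n.-1)%N ->
  Lp (toep_symbol n Ba Bb i%:Z) (toep_symbol n Ba Bb (i%:Z - n%:Z)).
Proof.
move=> ha hb la lb hi.
have -> : i%:Z - n%:Z = Negz (n - i).-1 by rewrite NegzE; lia.
rewrite /toep_symbol prednK; last by lia.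
rewrite /toep_prod.
rewrite -(big_mkord xpredT (fun k : nat => Ba (i%:Z - k%:Z) *m Bb (k%:Z - 0%N%:Z))).
rewrite -(big_mkord xpredT (fun k : nat => Ba (0%N%:Z - k%:Z) *m Bb (k%:Z - (n - i)%N%:Z))).
rewrite (big_cat_nat _ (n := i)) //=; last by lia.
rewrite (big_cat_nat _ (n := (n - i)%N) (m := 0%N) (p := n)
  (F := fun k : nat => Ba (0%N%:Z - k%:Z) *m Bb (k%:Z - (n - i)%N%:Z))) //=; last by lia.
rewrite [X in Lp _ X]addrC; apply: LpD.
- rewrite (big_addn 0 n (n - i)) (_ : (n - (n - i))%N = i); last by lia.
  apply: Lp_sum => k; rewrite mem_index_iota => hk.
  rewrite (_ : (k + (n - i))%N%:Z - (n - i)%N%:Z = k%:Z); last by lia.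
  rewrite (_ : 0%N%:Z - (k + (n - i))%N%:Z = (i - k)%N%:Z - n%:Z); last by lia.
  rewrite (_ : i%:Z - k%:Z = (i - k)%N%:Z); last by lia.
  rewrite (_ : k%:Z - 0%N%:Z = k%:Z); last by lia.
  by apply: LpMr; [exact: hb | apply: la; lia].
- rewrite (big_addn 0 n i); apply: Lp_sum => k; rewrite mem_index_iota => hk.
  rewrite (_ : 0%N%:Z - k%:Z = i%:Z - (k + i)%N%:Z); last by lia.
  rewrite (_ : k%:Z - (n - i)%N%:Z = (k + i)%N%:Z - n%:Z); last by lia.
  rewrite (_ : (k + i)%N%:Z - 0%N%:Z = (k + i)%N%:Z); last by lia.
  rewrite !(polyalg_comm (ha _) (hb _)).
  by apply: LpMr; [exact: ha | apply: lb; lia].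
Qed.

Lemma toeplitz_corner_rel_subalgebra : is_subalgebra (toeplitz_corner_rel Lp).
Proof.
split.
- exists (fun _ => 0); split => // [_|i j]; [exact: polyalg0 | by rewrite blk0].
- move=> A B [Ba [ha tA la]] [Bb [hb tB lb]].
  exists (fun k => Ba k + Bb k); split => [k|i j|i hi]; first exact: polyalgD.
    by rewrite blkD tA tB.
  by apply: LpD; [apply: la | apply: lb].
- move=> c A [Ba [ha tA la]]; exists (fun k => c *: Ba k); split => [k|i j|i hi].
  + exact: polyalgZ.
  + by rewrite blkZ tA.
  + rewrite -!mul_mx_scalar; apply: LpMr; last exact: la.
    by exists c%:P; rewrite horner_mx_C.
- move=> A B [Ba [ha tA la]] [Bb [hb tB lb]].
  have tc : toeplitz_mul_cond n Ba Bb.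
    by move=> u v hu hv; apply: Lp_cross; [apply: la | apply: lb]; lia.
  exists (toep_symbol n Ba Bb); split => [k||].
  + exact: toep_symbol_polyalg.
  + exact: toeplitz_mul.
  + by move=> i; apply: toep_symbol_corner.
Qed.

End CornerRelation.

Lemma poly_ideal_principal (C : fieldType) (I : {poly C} -> Prop) (p : {poly C}) :
  (forall x y, I x -> I y -> I (x + y)) -> (forall c x, I x -> I (c * x)) ->
  I p -> p != 0 -> exists g, [/\ I g, g != 0 & forall x, I x -> g %| x].
Proof.
move=> ID IM Ip p0.
suff: forall N (g : {poly C}), (size g <= N)%N -> I g -> g != 0 ->
    exists g, [/\ I g, g != 0 & forall x, I x -> g %| x].
  by move/(_ (size p) p (leqnn _) Ip p0).
elim=> [|N IH] g sg Ig g0; first by move: g0; rewrite -size_poly_eq0 -leqn0 sg.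
have [[x [Ix gNx]] | gI] := classic (exists x, I x /\ ~~ (g %| x)); last first.
  by exists g; split=> // x Ix; apply/negPn/negP => gNx; apply: gI; exists x.
apply: (IH (x %% g)) => //.
- by rewrite -ltnS (leq_trans _ sg) // ltn_modp.
- have -> : x %% g = x + - (x %/ g) * g by rewrite {2}(divp_eq x g) mulNr addrC addKr.
  by apply: ID => //; apply: IM.
Qed.

Lemma coprime_inverse_mod (C : closedFieldType) (p h f : {poly C}) :
  p != 0 -> coprimep h f -> exists2 chi, coprimep chi p & h %| 1 - chi * f.
Proof.
move=> p0 hf.
have [[u1 u2] /= hu] := Bezout_eq1_coprimepP _ _ hf.
set r := gdcop h p.
have [[v1 v2] /= hv] := Bezout_eq1_coprimepP _ _ (coprimep_gdco h p0 : coprimep r h).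
set chi := u2 * v1 * r + v2 * h.
have h_inv : h %| 1 - chi * f.
  apply/dvdpP; exists (u1 + v2 - u1 * v2 * h - v2 * f).
  have e1 : u2 * f = 1 - u1 * h by rewrite -hu; ring.
  have e2 : v1 * r = 1 - v2 * h by rewrite -hv; ring.
  have -> : chi * f = u2 * f * (v1 * r) + v2 * h * f by rewrite /chi; ring.
  by rewrite e1 e2; ring.
have r_inv : r %| chi - 1.
  have e : v2 * h = 1 - v1 * r by rewrite -hv; ring.
  by apply/dvdpP; exists ((u2 - 1) * v1); rewrite /chi e; ring.
exists chi => //; apply/negPn/negP => /closed_rootP[x].
rewrite root_gcd => /andP[chi_x p_x].
have [h_x | hN_x] := boolP (root h x).
  move/rootP: (root_dvdp h_inv h_x).
  by rewrite hornerD hornerN hornerM (rootP chi_x) mul0r hornerC subr0 => /eqP; rewrite oner_eq0.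
have r_x : root r x by rewrite root_gdco // p_x hN_x.
move/rootP: (root_dvdp r_inv r_x).
by rewrite hornerD hornerN (rootP chi_x) hornerC sub0r => /eqP; rewrite oppr_eq0 oner_eq0.
Qed.

Section CornerLattice.
Variables (C : fieldType) (p : {poly C}) (W : {poly C} -> {poly C} -> Prop).
Hypothesis p_neq0 : p != 0.
Hypothesis W_iso : forall x y x' y', W x y -> W x' y' -> p %| x * y' - y * x'.

Definition lattice_closed (P : {poly C} -> {poly C} -> Prop) :=
  [/\ (forall x y x' y', P x y -> P x' y' -> P (x + x') (y + y')),
      (forall c x y, P x y -> P (c * x) (c * y)),
      (forall x y, W x y -> P x y), P p 0 & P 0 p].

Definition lattice_span x y := forall P, lattice_closed P -> P x y.

Lemma lattice_span_closed : lattice_closed lattice_span.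
Proof.
split=> [x y x' y' h h' P hP | c x y h P hP | x y h P [] | P [] | P []] //.
- by case: (hP) => hD _ _ _ _; apply: hD; [apply: h | apply: h'].
- by case: (hP) => _ hM _ _ _; apply: hM; apply: h.
- by move=> _ _ hW _ _; apply: hW.
Qed.

Lemma lattice_closed_iso a b :
  (forall x y, W x y -> p %| x * b - y * a) ->
  lattice_closed (fun x y => p %| x * b - y * a).
Proof.
move=> hW; split=> // [x1 y1 x2 y2 h h' | c x1 y1 h | | ].
- have -> : (x1 + x2) * b - (y1 + y2) * a = (x1 * b - y1 * a) + (x2 * b - y2 * a) by ring.
  exact: dvdp_add.
- have -> : c * x1 * b - c * y1 * a = c * (x1 * b - y1 * a) by ring.
  exact: dvdp_mull.
- by rewrite mul0r subr0 dvdp_mulIl.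
- by rewrite mul0r sub0r dvdpNr dvdp_mulIl.
Qed.

Lemma lattice_span_iso x y x' y' :
  lattice_span x y -> lattice_span x' y' -> p %| x * y' - y * x'.
Proof.
move=> hxy hxy'.
have W_span a b : W a b -> p %| x * b - y * a.
  by move=> hab; apply: (hxy _ (lattice_closed_iso (fun u v huv => W_iso huv hab))).
have W_iso_xy a b : W a b -> p %| a * y - b * x.
  by move=> hab; rewrite -dvdpNr opprB [a * y]mulrC [b * x]mulrC; apply: W_span.
have := hxy' _ (lattice_closed_iso W_iso_xy).
by rewrite -dvdpNr opprB [y * x']mulrC [x * y']mulrC.
Qed.

Lemma lattice_span_generators : exists e f h,
  [/\ lattice_span e f, e * h = p &
      forall x y, lattice_span x y -> exists2 c, x = c * e & h %| y - c * f].
Proof.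
have [LD LM _ Lp0 L0p] := lattice_span_closed.
have [e [[f ef] e_neq0 e_dvd]] :
    exists e, [/\ exists f, lattice_span e f, e != 0 &
                  forall x, (exists y, lattice_span x y) -> e %| x].
  apply: poly_ideal_principal (ex_intro _ 0 Lp0) p_neq0.
    by move=> x x' [y h] [y' h']; exists (y + y'); apply: LD.
  by move=> c x [y h]; exists (c * y); apply: LM.
have [g [g_span _ g_dvd]] :
    exists g, [/\ lattice_span 0 g, g != 0 & forall y, lattice_span 0 y -> g %| y].
  apply: poly_ideal_principal L0p p_neq0 => [y y' h h' | c y h].
    by rewrite -[0]addr0; apply: LD.
  by rewrite -(mulr0 c); apply: LM.
have e_dvd_p : e %| p by apply: e_dvd; exists 0.
exists e, f, (p %/ e); split=> //; first by rewrite mulrC divpK.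
have h_dvd_g : p %/ e %| g.
  have := lattice_span_iso ef g_span; rewrite mulr0 subr0.
  by rewrite -{1}(divpK e_dvd_p) mulrC dvdp_mul2l.
move=> x y xy; exists (x %/ e); first by rewrite divpK // e_dvd; last by exists y.
apply: dvdp_trans h_dvd_g _; apply: g_dvd.
have := LD _ _ _ _ xy (LM (- (x %/ e)) _ _ ef).
by rewrite mulNr divpK ?subrr ?mulNr // e_dvd; last by exists y.
Qed.

End CornerLattice.

Lemma isotropic_corner_form (C : closedFieldType) (p : {poly C})
    (W : {poly C} -> {poly C} -> Prop) :
  p != 0 -> (forall x y x' y', W x y -> W x' y' -> p %| x * y' - y * x') ->
  exists pp pm chi : {poly C},
    [/\ pp * pm %| p, coprimep chi p &
        forall x y, W x y -> exists a1 a2,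
          [/\ x = pp * a1, y = pm * a2 & p %/ (pp * pm) %| a1 - chi * a2]].
Proof.
move=> p_neq0 W_iso.
have [e [f [h [_ ehp gen]]]] := lattice_span_generators p_neq0 W_iso.
have e_neq0 : e != 0 by apply: contraNneq p_neq0 => e0; rewrite -ehp e0 mul0r.
have h_neq0 : h != 0 by apply: contraNneq p_neq0 => h0; rewrite -ehp h0 mulr0.
set g := gcdp h f; set h' := h %/ g; set f' := f %/ g.
have h_eq : h = h' * g by rewrite divpK // dvdp_gcdl.
have f_eq : f = f' * g by rewrite divpK // dvdp_gcdr.
have cop : coprimep h' f' by rewrite coprimep_div_gcd // h_neq0.
have [chi chi_p h'_inv] := coprime_inverse_mod p_neq0 cop.
have g_neq0 : g != 0 by rewrite gcdp_eq0 negb_and h_neq0.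
have p_eq : p = e * g * h' by rewrite -ehp h_eq; ring.
exists e, g, chi; split => // [|x y xy]; first by rewrite p_eq dvdp_mulr.
have [_ _ LW _ _] := lattice_span_closed p W.
have [c -> /dvdpP[k yE]] := gen x y (LW _ _ xy).
exists c, (c * f' + k * h'); split; first by rewrite mulrC.
  by rewrite -[y](subrK (c * f)) yE h_eq f_eq; ring.
rewrite p_eq mulKp ?mulf_neq0 //.
have -> : c - chi * (c * f' + k * h') = c * (1 - chi * f') - chi * k * h' by ring.
by rewrite dvdp_sub ?dvdp_mull ?dvdp_mulIr.
Qed.

Section CornerPolynomials.
Variables (C : fieldType) (n d : nat) (M : 'M[C]_d.+1).
Local Notation m := d.+1.
Local Notation p := (mxminpoly M).

Definition frakB_corner (pp pm chi : {poly C}) (X Y : 'M[C]_m) :=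
  exists a1 a2 : {poly C},
    [/\ X = horner_mx M pp *m horner_mx M a1, Y = horner_mx M pm *m horner_mx M a2
      & p %/ (pp * pm) %| a1 - chi * a2].

Lemma frakB_subalgebra pp pm chi :
  pp * pm %| p -> is_subalgebra (frakB (n := n) M pp pm chi).
Proof.
move=> hdiv; apply: (@toeplitz_corner_rel_subalgebra C n d M (frakB_corner pp pm chi)).
- by exists 0, 0; rewrite !rmorph0 !mulmx0 mulr0 subr0 dvdp0.
- move=> X Y X' Y' [a1 [a2 [-> -> h]]] [b1 [b2 [-> -> h']]].
  exists (a1 + b1), (a2 + b2); rewrite !rmorphD !mulmxDr; split => //.
  have -> : a1 + b1 - chi * (a2 + b2) = (a1 - chi * a2) + (b1 - chi * b2) by ring.
  exact: dvdp_add.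
- move=> X Y R [r ->] [a1 [a2 [-> -> h]]]; exists (a1 * r), (a2 * r).
  rewrite !rmorphM /= !mulmxE !mulrA; split => //.
  have -> : a1 * r - chi * a2 * r = (a1 - chi * a2) * r by ring.
  exact: dvdp_mulr.
- move=> X Y X' Y' [a1 [a2 [-> -> h]]] [b1 [b2 [-> -> h']]].
  apply/eqP; rewrite -subr_eq0 !mulmxE -!rmorphM -rmorphB; apply/eqP/mxminpoly_minP.
  have -> : pp * a1 * (pm * b2) - pm * a2 * (pp * b1) =
    ((a1 - chi * a2) * b2 - a2 * (b1 - chi * b2)) * (pp * pm) by ring.
  rewrite -{1}(divpK hdiv) dvdp_mul //.
  by apply: dvdp_sub; [apply: dvdp_mulr | apply: dvdp_mull].
Qed.

Lemma frakB_toeplitzP pp pm chi A : frakB (n := n) M pp pm chi A -> toeplitzP M A.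
Proof. by move=> [B [hB tB _]]; exists B. Qed.

Definition corner_polys (S : 'M[C]_(n * m) -> Prop) (x y : {poly C}) :=
  exists A (B : int -> 'M[C]_m) (i : nat),
    [/\ S A, is_block_toeplitz A B, (0 < i < n)%N,
        horner_mx M x = B i%:Z & horner_mx M y = B (i%:Z - n%:Z)].

Lemma corner_polys_iso (S : 'M[C]_(n * m) -> Prop) :
  (forall A, S A -> toeplitzP M A) -> (forall A B, S A -> S B -> S (A *m B)) ->
  forall x y x' y', corner_polys S x y -> corner_polys S x' y' ->
    p %| x * y' - y * x'.
Proof.
move=> ST SM x y x' y' [A [Ba [i [SA tA hi hx hy]]]] [A' [Bb [j [SA' tA' hj hx' hy']]]].
have [Bc [_ tc]] := ST _ (SM _ _ SA SA').
apply/mxminpoly_minP.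
by rewrite rmorphB !rmorphM /= hx hy hx' hy' -!mulmxE (toeplitz_mul_condP tA tA' tc) ?subrr.
Qed.

Lemma corner_form_sub_frakB (S : 'M[C]_(n * m) -> Prop) pp pm chi :
  (forall A, S A -> toeplitzP M A) ->
  (forall x y, corner_polys S x y -> exists a1 a2,
     [/\ x = pp * a1, y = pm * a2 & p %/ (pp * pm) %| a1 - chi * a2]) ->
  forall A, S A -> frakB (n := n) M pp pm chi A.
Proof.
move=> ST hW A SA; have [B [hB tB]] := ST _ SA; exists B; split => // i /andP[i1 i2].
have [x hx] := hB i%:Z; have [y hy] := hB (i%:Z - n%:Z).
have [|a1 [a2 [xE yE hq]]] := hW x y.
  by exists A, B, i; split => //; apply/andP; split; lia.
by exists a1, a2; rewrite hx hy xE yE !rmorphM /= !mulmxE.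
Qed.

End CornerPolynomials.

Theorem theorem7p5 (C : numClosedFieldType) (n d : nat) (M : 'M[C]_d.+1)
    (Hn : (2 <= n)%N) (HM : nonderogatory M)
    (S : 'M[C]_(n * d.+1) -> Prop)
    (HS : is_maximal_subalgebra_of (@toeplitzP C n d M) S) :
  exists pp pm chi : {poly C},
    [/\ pp * pm %| mxminpoly M,
        coprimep chi (mxminpoly M) &
        forall A, S A <-> @frakB C n d M pp pm chi A].
Proof.
have p_neq0 : mxminpoly M != 0 by rewrite monic_neq0 // mxminpoly_monic.
have [[_ _ _ SM] ST S_max] := HS.
have [pp [pm [chi [hdiv hcop hW]]]] :=
  isotropic_corner_form p_neq0 (corner_polys_iso ST SM).
exists pp, pm, chi; split => // A; split; first exact: corner_form_sub_frakB ST hW A.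
apply: S_max (frakB_subalgebra n chi hdiv) _ (corner_form_sub_frakB ST hW) A.
exact: frakB_toeplitzP.
Qed.
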